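(* Let $h>0$ be such that $D(q):=\big(I_d+\frac{h^2}{2}\nabla^2F(q)M\big)^{-1}$ exists for every $q\in\mathbb{R}^d$. Then for every $n\ge 1$ and every fixed realization of the Wiener increments, the map $(p,q)\mapsto(P^h[n],Q^h[n])$ defined by the scheme started at $(P^h[0],Q^h[0])=(p,q)$ has Jacobian determinant $$\det\frac{\partial(P^h[n],Q^h[n])}{\partial(p,q)}=e^{-v t_n d},\qquad t_n=nh.$$
   Context: Let $d\le m$, $F\in C^\infty(\mathbb{R}^d,\mathbb{R})$, $f=\nabla F$, $M\in\mathbb{R}^{d\times d}$ symmetric positive definite, $v>0$, $\sigma=(\sigma_1,\dots,\sigma_m)\in\mathbb{R}^{d\times m}$, $W$ a standard $m$-dimensional Wiener process. For a step size $h>0$, $t_n=nh$, $\Delta_{n+1}W=W(t_{n+1})-W(t_n)$, the scheme is $$P^h[n+1]=e^{-vh}P^h[n]-\tfrac{h^2}{2}\nabla^2F(Q^h[n])MP^h[n+1]-h\big(1+\tfrac{vh}{2}\big)e^{-vh}f(Q^h[n])-\big(1+\tfrac{vh}{2}\big)e^{-vh}\sigma\Delta_{n+1}W,$$ $$Q^h[n+1]=Q^h[n]+h\big(1-\tfrac{vh}{2}\big)e^{vh}MP^h[n+1]+\tfrac{h^2}{2}Mf(Q^h[n])+\tfrac{h}{2}M\sigma\Delta_{n+1}W,$$ with the first equation solved for $P^h[n+1]$. *)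

From Stdlib Require Import Reals.
From mathcomp Require Import all_boot all_fingroup.
Set Implicit Arguments. Unset Strict Implicit. Unset Printing Implicit Defensive.

Local Open Scope R_scope.

Definition vec (n : nat) := 'I_n -> R.
Definition rmat (n m : nat) := 'I_n -> 'I_m -> R.

Definition rsum (n : nat) (g : 'I_n -> R) : R := \big[Rplus/0]_(i < n) g i.

Definition mulmv (n m : nat) (A : rmat n m) (x : vec m) : vec n :=
  fun i => rsum (fun j => A i j * x j).
Definition mulmm (n k m : nat) (A : rmat n k) (B : rmat k m) : rmat n m :=
  fun i j => rsum (fun l => A i l * B l j).
Definition rid (n : nat) : rmat n n := fun i j => if i == j then 1 else 0.
Arguments rid n : clear implicits.

Definition rdet (n : nat) (A : rmat n n) : R :=
  \big[Rplus/0]_(s : 'S_n)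
     ((if odd_perm s then -1 else 1) * \big[Rmult/1]_(i < n) A i (s i)).

Definition invertible (n : nat) (A : rmat n n) : Prop :=
  exists B : rmat n n, mulmm B A = rid n /\ mulmm A B = rid n.

Definition upd (n : nat) (x : vec n) (j : 'I_n) (t : R) : vec n :=
  fun k => if k == j then t else x k.

Definition is_partial (n : nat) (g : vec n -> R) (x : vec n) (j : 'I_n) (l : R) : Prop :=
  derivable_pt_lim (fun t => g (upd x j t)) (x j) l.

Definition rcontinuous (n : nat) (g : vec n -> R) : Prop :=
  forall x eps, 0 < eps -> exists delta, 0 < delta /\
    forall y : vec n, (forall i, Rabs (y i - x i) < delta) -> Rabs (g y - g x) < eps.

Fixpoint Ck (n : nat) (k : nat) (g : vec n -> R) : Prop :=
  match k with
  | O => rcontinuous g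
  | S k' => rcontinuous g /\ exists G : 'I_n -> vec n -> R,
      (forall x j, is_partial g x j (G j x)) /\ (forall j, Ck k' (G j))
  end.

Definition smooth (n : nat) (g : vec n -> R) : Prop := forall k, Ck k g.

Definition sym_posdef (n : nat) (M : rmat n n) : Prop :=
  (forall i j, M i j = M j i) /\
  (forall x : vec n, (exists i, x i <> 0) -> 0 < rsum (fun i => rsum (fun j => x i * M i j * x j))).

(* phase space R^{2d} = R^d x R^d, first block p, second block q *)
Definition zP (d : nat) (z : vec (d + d)) : vec d := fun i => z (lshift d i).
Definition zQ (d : nat) (z : vec (d + d)) : vec d := fun i => z (rshift d i).
Definition pair_vec (d : nat) (p q : vec d) : vec (d + d) :=
  fun k => match split k with inl i => p i | inr i => q i end.

(* One step of the scheme (first equation in implicit form).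
   Hs = Hessian of F, noise = sigma Delta_{n+1} W. *)
Definition scheme_step (d : nat) (f : vec d -> vec d) (Hs : vec d -> rmat d d)
  (M : rmat d d) (v h : R) (noise : vec d) (P0 Q0 P1 Q1 : vec d) : Prop :=
  forall i : 'I_d,
   P1 i = exp (- v * h) * P0 i
          - h ^ 2 / 2 * mulmv (Hs Q0) (mulmv M P1) i
          - h * (1 + v * h / 2) * exp (- v * h) * f Q0 i
          - (1 + v * h / 2) * exp (- v * h) * noise i
   /\
   Q1 i = Q0 i + h * (1 - v * h / 2) * exp (v * h) * mulmv M P1 i
          + h ^ 2 / 2 * mulmv M (f Q0) i
          + h / 2 * mulmv M noise i.

(* One step of the scheme is a map whose Jacobian is a 2x2 block matrix: with
   [D = (1 + h^2/2 H M)^-1] (H the Hessian at the old position) the momentum block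
   is [e^{-vh} D], and the whole matrix factors as a block lower unitriangular matrix
   times a block upper triangular one with diagonal blocks [e^{-vh} D] and
   [1 + h^2/2 M H].  By Sylvester's identity [det (1 + h^2/2 M H) = det D^-1], so each
   step has Jacobian determinant [e^{-vhd}].  The chain rule turns the Jacobian of n
   steps into the product of the step Jacobians, whose determinant is [e^{-v t_n d}]. *)

From Stdlib Require Import Reals Lra IndefiniteDescription FunctionalExtensionality.
From mathcomp Require Import all_boot all_fingroup all_algebra.
From mathcomp Require Import Rstruct.
Import GRing.Theory.
Set Implicit Arguments. Unset Strict Implicit. Unset Printing Implicit Defensive.
Local Open Scope R_scope.

Definition tends_to (f : R -> R) (t0 a : R) : Prop :=
  forall eps, 0 < eps -> exists del, 0 < del /\
    forall t, Rabs (t - t0) < del -> Rabs (f t - a) < eps.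

Lemma derivable_pt_lim_tends_to f t0 l : derivable_pt_lim f t0 l -> tends_to f t0 (f t0).
Proof.
move=> Hf eps Heps.
have [del [Hdel Hnear]] := derivable_continuous_pt f t0 (exist _ l Hf) eps Heps.
exists del; split => // t Ht.
case: (Req_dec t t0) => [->|Hne]; first by rewrite Rminus_diag Rabs_R0.
by apply: Hnear; repeat split => //; apply: not_eq_sym.
Qed.

Lemma near_forall_ord n (Pr : 'I_n -> R -> Prop) t0 :
  (forall i, exists del, 0 < del /\ forall t, Rabs (t - t0) < del -> Pr i t) ->
  exists del, 0 < del /\ forall t, Rabs (t - t0) < del -> forall i, Pr i t.
Proof.
elim: n Pr => [|n IH] Pr Hnear; first by exists 1; split; [lra | move=> t _ []].
have [d1 [Hd1 H1]] := IH (fun i => Pr (lift ord0 i)) (fun i => Hnear (lift ord0 i)).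
have [d0 [Hd0 H0]] := Hnear ord0.
exists (Rmin d0 d1); split; first exact: Rmin_pos.
move=> t Ht i; have := Rmin_l d0 d1; have := Rmin_r d0 d1.
by case: (unliftP ord0 i) => [j ->|->] *; [apply: H1 | apply: H0]; lra.
Qed.

Lemma derivable_pt_lim_rsum n (F : 'I_n -> R -> R) (l : 'I_n -> R) t0 :
  (forall i, derivable_pt_lim (F i) t0 (l i)) ->
  derivable_pt_lim (fun t => rsum (fun i => F i t)) t0 (rsum l).
Proof.
elim: n F l => [|n IH] F l H.
  rewrite /rsum big_ord0; apply: derivable_pt_lim_ext (derivable_pt_lim_const 0 t0) => t.
  by rewrite big_ord0.
rewrite /rsum big_ord_recl.
apply: derivable_pt_lim_ext (derivable_pt_lim_plus _ _ _ _ _ (H ord0)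
   (IH (fun i => F (lift ord0 i)) (fun i => l (lift ord0 i)) (fun i => H _))) => t.
by rewrite /plus_fct /rsum big_ord_recl.
Qed.

(* Product rule needing only a limit, not a derivative, of the first factor:
   this is what the mean value points in the chain rule provide. *)
Lemma derivable_pt_lim_mult_vanishing (al be : R -> R) a b t0 :
  tends_to al t0 a -> be t0 = 0 -> derivable_pt_lim be t0 b ->
  derivable_pt_lim (fun t => al t * be t) t0 (a * b).
Proof.
move=> Ha Hb0 Hb eps Heps.
set e1 := Rmin 1 (eps / (2 * (Rabs a + 1))).
set e2 := eps / (2 * (Rabs b + 1)).
have Ha0 := Rabs_pos a; have Hb0' := Rabs_pos b.
have He1 : 0 < e1 by apply: Rmin_pos; [lra | apply: Rdiv_lt_0_compat; lra].
have He2 : 0 < e2 by apply: Rdiv_lt_0_compat; lra.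
have [d1 Hd1] := Hb e1 He1.
have [d2 [Hd2 H2]] := Ha e2 He2.
exists (mkposreal _ (Rmin_pos _ _ (cond_pos d1) Hd2)) => hh Hh0 Hhl /=.
have Hhl1 : Rabs hh < d1 by apply: Rlt_le_trans Hhl (Rmin_l _ _).
have Hhl2 : Rabs hh < d2 by apply: Rlt_le_trans Hhl (Rmin_r _ _).
have Hw := Hd1 hh Hh0 Hhl1.
have Hu : Rabs (al (t0 + hh) - a) < e2 by apply: H2; rewrite Rplus_minus_l.
rewrite Hb0 Rmult_0_r Rminus_0_r in Hw *.
set u := al (t0 + hh) - a in Hu.
set w := be (t0 + hh) / hh - b in Hw.
have -> : (al (t0 + hh) * be (t0 + hh) - 0) / hh - a * b = a * w + u * b + u * w.
  by rewrite /u /w; field.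
have Hae : Rabs a * e1 <= eps / 2.
  apply: Rle_trans (Rmult_le_compat_l _ _ _ Ha0 (Rmin_r _ _)) _.
  apply: (Rmult_le_reg_r (2 * (Rabs a + 1))); first lra.
  have -> : Rabs a * (eps / (2 * (Rabs a + 1))) * (2 * (Rabs a + 1)) = Rabs a * eps
    by field; lra.
  nra.
have Hbe : e2 * (Rabs b + 1) = eps / 2 by rewrite /e2; field; lra.
have He1a : e1 <= 1 := Rmin_l _ _.
apply: Rle_lt_trans (Rabs_triang _ _) _.
apply: Rle_lt_trans (Rplus_le_compat_r _ _ _ (Rabs_triang _ _)) _.
rewrite !Rabs_mult; have := Rabs_pos w; have := Rabs_pos u; nra.
Qed.

Lemma MVT_signed (phi phi' : R -> R) a b : (forall s, derivable_pt_lim phi s (phi' s)) ->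
  exists xi, Rabs (xi - a) <= Rabs (b - a) /\ phi b - phi a = phi' xi * (b - a).
Proof.
move=> Hphi; case: (Rtotal_order a b) => [Hab|[->|Hab]].
- have [c [Hc Hmid]] := MVT_cor2 phi phi' _ _ Hab (fun c _ => Hphi c).
  exists c; split => //; rewrite !Rabs_right; lra.
- by exists b; split; [right | rewrite !Rminus_diag; ring].
- have [c [Hc Hmid]] := MVT_cor2 phi phi' _ _ Hab (fun c _ => Hphi c).
  exists c; split; last by lra.
  rewrite !Rabs_left1; lra.
Qed.

Lemma upd_same n (x : vec n) j t : upd x j t j = t.
Proof. by rewrite /upd eqxx. Qed.

Lemma upd_upd n (x : vec n) j s t : upd (upd x j s) j t = upd x j t.
Proof. by apply: functional_extensionality => i; rewrite /upd; case: (i == j). Qed.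

Lemma upd_id n (x : vec n) j : upd x j (x j) = x.
Proof. by apply: functional_extensionality => i; rewrite /upd; case: eqP => [->|]. Qed.

Lemma is_partial_upd n (g : vec n -> R) G (Hg : forall x j, is_partial g x j (G j x)) y k s :
  derivable_pt_lim (fun s' => g (upd y k s')) s (G k (upd y k s)).
Proof.
have := Hg (upd y k s) k; rewrite /is_partial upd_same.
by apply: derivable_pt_lim_ext => s'; rewrite upd_upd.
Qed.

Lemma rsum_telescope n (u : nat -> R) : rsum (fun i : 'I_n => u i.+1 - u i) = u n - u 0%N.
Proof.
elim: n => [|n IH]; first by rewrite /rsum big_ord0; ring.
rewrite /rsum big_ord_recr /= -/(rsum _) IH; ring.
Qed.

Definition mix_vec n (x y : vec n) (k : nat) : vec n :=
  fun i => if (i < k)%N then x i else y i.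

Lemma mix_vecS n (x y : vec n) (k : 'I_n) : mix_vec x y k.+1 = upd (mix_vec x y k) k (x k).
Proof.
apply: functional_extensionality => i; rewrite /mix_vec /upd ltnS leq_eqVlt.
case: (eqVneq i k) => [->|Hne]; first by rewrite eqxx.
by have /negbTE -> : nat_of_ord i != k by [].
Qed.

Lemma mix_vec_upd n (x y : vec n) (k : 'I_n) : upd (mix_vec x y k) k (y k) = mix_vec x y k.
Proof.
apply: functional_extensionality => i; rewrite /mix_vec /upd.
by case: (eqVneq i k) => [->|//]; rewrite ltnn.
Qed.

Lemma mean_value_coord n (g : vec n -> R) (G : 'I_n -> vec n -> R)
  (Hg : forall x j, is_partial g x j (G j x)) (x y : vec n) :
  exists xi : 'I_n -> R, (forall k, Rabs (xi k - y k) <= Rabs (x k - y k)) /\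
    g x - g y = rsum (fun k => G k (upd (mix_vec x y k) k (xi k)) * (x k - y k)).
Proof.
have Hk k : exists xi, Rabs (xi - y k) <= Rabs (x k - y k) /\
    g (mix_vec x y k.+1) - g (mix_vec x y k) = G k (upd (mix_vec x y k) k xi) * (x k - y k).
  have [xi [Hxi Hmid]] := MVT_signed (y k) (x k) (is_partial_upd Hg (mix_vec x y k) k).
  by exists xi; rewrite mix_vecS -{2}mix_vec_upd.
have [xi Hxi] := functional_choice _ Hk.
exists xi; split => [k|]; first exact: (proj1 (Hxi k)).
have -> : g x - g y = rsum (fun k : 'I_n => g (mix_vec x y k.+1) - g (mix_vec x y k)).
  rewrite (rsum_telescope n (fun k => g (mix_vec x y k))); congr (g _ - g _);
    apply: functional_extensionality => i; rewrite /mix_vec ?ltn_ord //.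
by apply: eq_bigr => k _; rewrite (proj2 (Hxi k)).
Qed.

Lemma chain_rule n (g : vec n -> R) (G : 'I_n -> vec n -> R)
  (Hg : forall x j, is_partial g x j (G j x)) (HG : forall j, rcontinuous (G j))
  (c : R -> vec n) (dc : vec n) t0 :
  (forall i, derivable_pt_lim (fun t => c t i) t0 (dc i)) ->
  derivable_pt_lim (fun t => g (c t)) t0 (rsum (fun i => G i (c t0) * dc i)).
Proof.
move=> Hc.
have [xi Hxi] := functional_choice _ (fun t => mean_value_coord Hg (c t) (c t0)).
apply: (derivable_pt_lim_ext (fun t => g (c t0) +
    rsum (fun k => G k (upd (mix_vec (c t) (c t0) k) k (xi t k)) * (c t k - c t0 k)))).
  by move=> t; rewrite -(proj2 (Hxi t)); ring.
rewrite -[rsum _]Rplus_0_l; apply: derivable_pt_lim_plus; first exact: derivable_pt_lim_const.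
apply: derivable_pt_lim_rsum => k; apply: derivable_pt_lim_mult_vanishing.
- move=> eps Heps.
  have [dG [HdG Hnear]] := HG k (c t0) eps Heps.
  have [del [Hdel Hd]] := near_forall_ord (t0 := t0)
    (Pr := fun i t => Rabs (c t i - c t0 i) < dG)
    (fun i => derivable_pt_lim_tends_to (Hc i) HdG).
  exists del; split => // t Ht; apply: Hnear => i.
  apply: Rle_lt_trans (Hd t Ht i).
  rewrite /upd /mix_vec; case: (eqVneq i k) => [->|_]; first exact: (proj1 (Hxi t) k).
  case: (i < k)%N; first exact: Rle_refl.
  rewrite Rminus_diag Rabs_R0; exact: Rabs_pos.
- exact: Rminus_diag.
- rewrite -[dc k]Rminus_0_r.
  apply: derivable_pt_lim_minus; [exact: Hc | exact: derivable_pt_lim_const].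
Qed.

Lemma smooth_partial n (g : vec n -> R) (G : 'I_n -> vec n -> R) :
  smooth g -> (forall x j, is_partial g x j (G j x)) -> forall j, smooth (G j).
Proof.
move=> Hsm HG j k; have [_ [G' [HG' Hk]]] := Hsm k.+1.
suff -> : G j = G' j by exact: Hk.
by apply: functional_extensionality => x; exact: uniqueness_limite (HG x j) (HG' x j).
Qed.

Lemma smooth_C1 n (g : vec n -> R) : smooth g -> exists G : 'I_n -> vec n -> R,
  (forall x j, is_partial g x j (G j x)) /\ forall j, rcontinuous (G j).
Proof. by move=> Hsm; have [_ [G [HG HGc]]] := Hsm 1%N; exists G. Qed.

Local Open Scope ring_scope.

Definition ex_derive (f : R -> R) t0 := exists l, derivable_pt_lim f t0 l.

Lemma ex_derive_ext f g t0 : (forall t, f t = g t) -> ex_derive f t0 -> ex_derive g t0.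
Proof. by move=> H [l Hl]; exists l; apply: derivable_pt_lim_ext Hl. Qed.

Lemma ex_derive_const k t0 : ex_derive (fun _ => k) t0.
Proof. by exists 0; exact: derivable_pt_lim_const. Qed.

Lemma ex_derive_plus f g t0 : ex_derive f t0 -> ex_derive g t0 -> ex_derive (fun t => f t + g t) t0.
Proof. by move=> [l1 H1] [l2 H2]; eexists; exact: derivable_pt_lim_plus H1 H2. Qed.

Lemma ex_derive_mult f g t0 : ex_derive f t0 -> ex_derive g t0 -> ex_derive (fun t => f t * g t) t0.
Proof. by move=> [l1 H1] [l2 H2]; eexists; exact: derivable_pt_lim_mult H1 H2. Qed.

Lemma ex_derive_div f g t0 :
  ex_derive f t0 -> ex_derive g t0 -> g t0 <> 0 -> ex_derive (fun t => f t / g t) t0.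
Proof. by move=> [l1 H1] [l2 H2] Hg; eexists; exact: derivable_pt_lim_div H1 H2 Hg. Qed.

Lemma ex_derive_sum (I : Type) (r : seq I) (P : pred I) (F : I -> R -> R) t0 :
  (forall i, ex_derive (F i) t0) -> ex_derive (fun t => \sum_(i <- r | P i) F i t) t0.
Proof.
move=> HF; elim: r => [|a r IH].
  by apply: ex_derive_ext (ex_derive_const 0 t0) => t; rewrite big_nil.
case: (boolP (P a)) => Pa; last by apply: ex_derive_ext IH => t; rewrite big_cons (negbTE Pa).
by apply: ex_derive_ext (ex_derive_plus (HF a) IH) => t; rewrite big_cons Pa.
Qed.

Lemma ex_derive_prod (I : Type) (r : seq I) (P : pred I) (F : I -> R -> R) t0 :
  (forall i, ex_derive (F i) t0) -> ex_derive (fun t => \prod_(i <- r | P i) F i t) t0.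
Proof.
move=> HF; elim: r => [|a r IH].
  by apply: ex_derive_ext (ex_derive_const 1 t0) => t; rewrite big_nil.
case: (boolP (P a)) => Pa; last by apply: ex_derive_ext IH => t; rewrite big_cons (negbTE Pa).
by apply: ex_derive_ext (ex_derive_mult (HF a) IH) => t; rewrite big_cons Pa.
Qed.

Definition mx_is_derive m n (A : R -> 'M[R]_(m, n)) t0 (A' : 'M[R]_(m, n)) :=
  forall i j, derivable_pt_lim (fun t => A t i j) t0 (A' i j).

Definition ex_mx_derive m n (A : R -> 'M[R]_(m, n)) t0 :=
  forall i j, ex_derive (fun t => A t i j) t0.

Section MatrixDerivative.
Variables (m n p : nat) (t0 : R).

Lemma ex_mx_derive_is_derive (A : R -> 'M[R]_(m, n)) :
  ex_mx_derive A t0 -> exists A', mx_is_derive A t0 A'.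
Proof.
move=> HA; have [g Hg] := functional_choice
  (fun (ij : 'I_m * 'I_n) l => derivable_pt_lim (fun t => A t ij.1 ij.2) t0 l)
  (fun ij => HA ij.1 ij.2).
by exists (\matrix_(i, j) g (i, j)) => i j; rewrite mxE; exact: (Hg (i, j)).
Qed.

Lemma mx_is_derive_unique (A : R -> 'M[R]_(m, n)) A1 A2 :
  mx_is_derive A t0 A1 -> mx_is_derive A t0 A2 -> A1 = A2.
Proof. by move=> H1 H2; apply/matrixP => i j; exact: uniqueness_limite (H1 i j) (H2 i j). Qed.

Lemma mx_is_derive_ext (A B : R -> 'M[R]_(m, n)) A' :
  (forall t, A t = B t) -> mx_is_derive A t0 A' -> mx_is_derive B t0 A'.
Proof. by move=> H HA i j; apply: derivable_pt_lim_ext (HA i j) => t; rewrite H. Qed.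

Lemma mx_is_derive_const (C : 'M[R]_(m, n)) : mx_is_derive (fun _ => C) t0 0.
Proof. by move=> i j; rewrite mxE; exact: derivable_pt_lim_const. Qed.

Lemma mx_is_derive_add (A B : R -> 'M[R]_(m, n)) A' B' :
  mx_is_derive A t0 A' -> mx_is_derive B t0 B' -> mx_is_derive (fun t => A t + B t) t0 (A' + B').
Proof.
move=> HA HB i j; rewrite mxE.
by apply: derivable_pt_lim_ext (derivable_pt_lim_plus _ _ _ _ _ (HA i j) (HB i j)) => t; rewrite mxE.
Qed.

Lemma mx_is_derive_scale (A : R -> 'M[R]_(m, n)) A' k :
  mx_is_derive A t0 A' -> mx_is_derive (fun t => k *: A t) t0 (k *: A').
Proof.
move=> HA i j; rewrite mxE.
by apply: derivable_pt_lim_ext (derivable_pt_lim_scal _ k _ _ (HA i j)) => t; rewrite mxE.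
Qed.

Lemma mx_is_derive_sub (A B : R -> 'M[R]_(m, n)) A' B' :
  mx_is_derive A t0 A' -> mx_is_derive B t0 B' -> mx_is_derive (fun t => A t - B t) t0 (A' - B').
Proof.
move=> HA HB; have := mx_is_derive_add HA (mx_is_derive_scale (-1) HB).
by rewrite scaleN1r; apply: mx_is_derive_ext => t; rewrite scaleN1r.
Qed.

Lemma mx_is_derive_mul (A : R -> 'M[R]_(m, n)) (C : R -> 'M[R]_(n, p)) A' C' :
  mx_is_derive A t0 A' -> mx_is_derive C t0 C' ->
  mx_is_derive (fun t => A t *m C t) t0 (A' *m C t0 + A t0 *m C').
Proof.
move=> HA HC i j; rewrite !mxE -big_split /=.
have := derivable_pt_lim_rsum (fun k => derivable_pt_lim_mult _ _ _ _ _ (HA i k) (HC k j)).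
by apply: derivable_pt_lim_ext => t; rewrite mxE.
Qed.

End MatrixDerivative.

Lemma mx_is_derive_mull m n p (C : 'M[R]_(p, m)) (A : R -> 'M[R]_(m, n)) A' t0 :
  mx_is_derive A t0 A' -> mx_is_derive (fun t => C *m A t) t0 (C *m A').
Proof.
move=> HA; have := mx_is_derive_mul (mx_is_derive_const t0 C) HA.
by rewrite mul0mx add0r.
Qed.

Lemma ex_derive_det n (A : R -> 'M[R]_n) t0 :
  ex_mx_derive A t0 -> ex_derive (fun t => \det (A t)) t0.
Proof.
move=> HA; apply: ex_derive_sum => s.
apply: ex_derive_mult; first exact: ex_derive_const.
by apply: ex_derive_prod => i; exact: HA.
Qed.

(* Cramer's rule makes the entries of the inverse rational in those of [K]. *)
Lemma ex_mx_derive_invmx n (K : R -> 'M[R]_n) t0 :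
  (forall t, K t \in unitmx) -> ex_mx_derive K t0 -> ex_mx_derive (fun t => invmx (K t)) t0.
Proof.
move=> HU HK i j.
have Hadj : ex_derive (fun t => \adj (K t) i j) t0.
  apply: (@ex_derive_ext (fun t => (-1) ^+ (j + i) * \det (row' j (col' i (K t)))));
    first by move=> t; rewrite mxE.
  apply: ex_derive_mult; first exact: ex_derive_const.
  apply: ex_derive_det => a b.
  by apply: ex_derive_ext (HK (lift j a) (lift i b)) => t; rewrite !mxE.
have Hdet0 : \det (K t0) <> 0 by apply/eqP; rewrite -unitfE -unitmxE.
apply: ex_derive_ext (ex_derive_div Hadj (ex_derive_det HK) Hdet0) => t.
by rewrite /invmx HU [RHS]mxE mulrC.
Qed.

Lemma mx_is_derive_solve n k (K : R -> 'M[R]_n) (p r : R -> 'M[R]_(n, k)) t0 K' r' :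
  (forall t, K t \in unitmx) -> (forall t, K t *m p t = r t) ->
  mx_is_derive K t0 K' -> mx_is_derive r t0 r' ->
  mx_is_derive p t0 (invmx (K t0) *m (r' - K' *m p t0)).
Proof.
move=> HU HKp HK Hr.
have Hp t : p t = invmx (K t) *m r t by rewrite -HKp mulKmx.
have [p' Hp'] : exists p', mx_is_derive p t0 p'.
  have [Ki' HKi'] := ex_mx_derive_is_derive (ex_mx_derive_invmx HU (fun i j => ex_intro _ _ (HK i j))).
  by eexists; apply: mx_is_derive_ext (fun t => esym (Hp t)) (mx_is_derive_mul HKi' Hr).
have Hprod : K' *m p t0 + K t0 *m p' = r'.
  exact: mx_is_derive_unique (mx_is_derive_mul HK Hp') (mx_is_derive_ext (fun t => esym (HKp t)) Hr).
by rewrite -Hprod [K' *m _ + _]addrC addrK mulKmx.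
Qed.

(* Imported only here: its [ring] and [field] would shadow Stdlib's on the
   real-number goals above. *)
From mathcomp Require Import ring.

Definition cv n (x : vec n) : 'cV[R]_n := \col_i x i.
Definition mxr m n (A : rmat m n) : 'M[R]_(m, n) := \matrix_(i, j) A i j.

Lemma cv_mulmv m n (A : rmat m n) x : cv (mulmv A x) = mxr A *m cv x.
Proof. by apply/matrixP => i k; rewrite !mxE; apply: eq_bigr => j _; rewrite !mxE. Qed.

Lemma rdetE n (A : rmat n n) : rdet A = \det (mxr A).
Proof.
apply: eq_bigr => s _; rewrite -/(@GRing.mul R _ _).
by case: (odd_perm s); rewrite /= ?expr1 ?expr0; congr (_ * _); apply: eq_bigr => i _; rewrite mxE.
Qed.

Lemma mxr_mulmm n k m (A : rmat n k) (B : rmat k m) : mxr (mulmm A B) = mxr A *m mxr B.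
Proof. by apply/matrixP => i j; rewrite !mxE; apply: eq_bigr => l _; rewrite !mxE. Qed.

Lemma mxr_rid n : mxr (rid n) = 1%:M.
Proof. by apply/matrixP => i j; rewrite !mxE /rid; case: (i == j). Qed.

Lemma invertible_unitmx n (A : rmat n n) : invertible A -> mxr A \in unitmx.
Proof.
move=> [B [HBA _]].
have : mxr B *m mxr A = 1%:M by rewrite -mxr_mulmm HBA mxr_rid.
by case/mulmx1_unit.
Qed.

Lemma invertible_unitmx_shift d (A B : rmat d d) c :
  invertible (fun i j => rid d i j + c * mulmm A B i j) -> 1%:M + c *: (mxr A *m mxr B) \in unitmx.
Proof.
move/invertible_unitmx; congr (_ \in unitmx).
by apply/matrixP => i j; rewrite -mxr_mulmm !mxE /rid; case: (i == j).
Qed.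

Lemma pair_vecE d (p q : vec d) k : pair_vec p q k = col_mx (cv p) (cv q) k 0.
Proof. by rewrite mxE /pair_vec; case: (split k) => i; rewrite mxE. Qed.

Lemma zP_pair_vec d (p q : vec d) : zP (pair_vec p q) = p.
Proof. by apply: functional_extensionality => i; rewrite /zP /pair_vec (unsplitK (inl i)). Qed.

Lemma zQ_pair_vec d (p q : vec d) : zQ (pair_vec p q) = q.
Proof. by apply: functional_extensionality => i; rewrite /zQ /pair_vec (unsplitK (inr i)). Qed.

Lemma col_mx_zP_zQ d (z : vec (d + d)) : col_mx (cv (zP z)) (cv (zQ z)) = cv z.
Proof.
apply/matrixP => k l; rewrite ord1 -[k]splitK.
by case: (split k) => i; rewrite ?col_mxEu ?col_mxEd !mxE.
Qed.

Lemma mx_is_derive_col_mx m1 m2 n (A : R -> 'M[R]_(m1, n)) (B : R -> 'M[R]_(m2, n)) t0 A' B' :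
  mx_is_derive A t0 A' -> mx_is_derive B t0 B' ->
  mx_is_derive (fun t => col_mx (A t) (B t)) t0 (col_mx A' B').
Proof.
move=> HA HB i j; rewrite -[i](splitK); case: (split i) => k /=.
- by rewrite col_mxEu; apply: derivable_pt_lim_ext (HA k j) => t; rewrite col_mxEu.
- by rewrite col_mxEd; apply: derivable_pt_lim_ext (HB k j) => t; rewrite col_mxEd.
Qed.

Lemma mx_is_derive_usubmx m1 m2 n (A : R -> 'M[R]_(m1 + m2, n)) t0 A' :
  mx_is_derive A t0 A' -> mx_is_derive (fun t => usubmx (A t)) t0 (usubmx A').
Proof. by move=> HA i j; rewrite mxE; apply: derivable_pt_lim_ext (HA _ j) => t; rewrite mxE. Qed.

Lemma mx_is_derive_dsubmx m1 m2 n (A : R -> 'M[R]_(m1 + m2, n)) t0 A' :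
  mx_is_derive A t0 A' -> mx_is_derive (fun t => dsubmx (A t)) t0 (dsubmx A').
Proof. by move=> HA i j; rewrite mxE; apply: derivable_pt_lim_ext (HA _ j) => t; rewrite mxE. Qed.

(* With [DH i j l] the partial derivative in [q_l] of the Hessian entry [Hs i j]:
   [deriv_mx DH q w] is the derivative of [Hs] in the direction [w], and
   [deriv_mx_apply DH q u] is the linear map [w |-> deriv_mx DH q w *m u]. *)
Definition deriv_mx d (DH : 'I_d -> 'I_d -> 'I_d -> vec d -> R) q (w : 'cV[R]_d) : 'M[R]_d :=
  \matrix_(i, j) \sum_l DH i j l q * w l 0.
Definition deriv_mx_apply d (DH : 'I_d -> 'I_d -> 'I_d -> vec d -> R) q (u : 'cV[R]_d) : 'M[R]_d :=
  \matrix_(i, l) \sum_j DH i j l q * u j 0.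

Lemma deriv_mx_mulC d DH (q : vec d) (w u : 'cV[R]_d) :
  deriv_mx DH q w *m u = deriv_mx_apply DH q u *m w.
Proof.
apply/matrixP => i k; rewrite ord1 !mxE.
under eq_bigr do rewrite mxE mulr_suml.
under [RHS]eq_bigr do rewrite mxE mulr_suml.
rewrite exchange_big /=; apply: eq_bigr => l _; apply: eq_bigr => j _; ring.
Qed.

(* Jacobian of [(p0, q0) |-> (p1, q1)] for [p1 = E p0 - c Hs(q0) M p1 - b f(q0) - ...]
   and [q1 = q0 + a M p1 + c M f(q0) + ...]; the scheme has [E = e^{-vh}],
   [a = h (1 - vh/2) e^{vh}], [b = h (1 + vh/2) e^{-vh}] and [c = h^2/2]. *)
Definition step_jacobian d (Hs : vec d -> rmat d d) DH (M : rmat d d) (E a b c : R)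
  (q0 p1 : vec d) : 'M[R]_(d + d) :=
  let H := mxr (Hs q0) in let Mm := mxr M in
  let D := invmx (1%:M + c *: (H *m Mm)) in
  let X := E *: D in
  let Y := - (D *m (b *: H + c *: deriv_mx_apply DH q0 (Mm *m cv p1))) in
  block_mx X Y (a *: (Mm *m X)) (1%:M + a *: (Mm *m Y) + c *: (Mm *m H)).

Section OneStep.
Variables (d : nat) (f : vec d -> vec d) (Hs : vec d -> rmat d d)
  (DH : 'I_d -> 'I_d -> 'I_d -> vec d -> R) (M : rmat d d) (E a b c e g : R) (noise : vec d).
Hypothesis Hf : forall i q j, is_partial (fun x => f x i) q j (Hs q i j).
Hypothesis HHc : forall i j, rcontinuous (fun x => Hs x i j).
Hypothesis HDH : forall i j q l, is_partial (fun x => Hs x i j) q l (DH i j l q).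
Hypothesis HDHc : forall i j l, rcontinuous (DH i j l).
Hypothesis HU : forall q, 1%:M + c *: (mxr (Hs q) *m mxr M) \in unitmx.
Variables (P0 Q0 P1 Q1 : R -> vec d) (t0 : R) (dz : 'cV[R]_(d + d)).
Hypothesis HP1 : forall t i, P1 t i = E * P0 t i - c * mulmv (Hs (Q0 t)) (mulmv M (P1 t)) i
                                    - b * f (Q0 t) i - g * noise i.
Hypothesis HQ1 : forall t i, Q1 t i = Q0 t i + a * mulmv M (P1 t) i
                                    + c * mulmv M (f (Q0 t)) i + e * mulmv M noise i.
Hypothesis Hdz : mx_is_derive (fun t => col_mx (cv (P0 t)) (cv (Q0 t))) t0 dz.

Let J := step_jacobian Hs DH M E a b c (Q0 t0) (P1 t0).
Let dP := usubmx dz.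
Let dQ := dsubmx dz.

Lemma P0_derive : mx_is_derive (fun t => cv (P0 t)) t0 dP.
Proof. exact: mx_is_derive_ext (fun t => col_mxKu _ _) (mx_is_derive_usubmx Hdz). Qed.

Lemma Q0_derive : mx_is_derive (fun t => cv (Q0 t)) t0 dQ.
Proof. exact: mx_is_derive_ext (fun t => col_mxKd _ _) (mx_is_derive_dsubmx Hdz). Qed.

Lemma Q0_coord_derive l : derivable_pt_lim (fun t => Q0 t l) t0 (dQ l 0).
Proof. by apply: derivable_pt_lim_ext (Q0_derive l 0) => t; rewrite mxE. Qed.

Lemma f_comp_derive : mx_is_derive (fun t => cv (f (Q0 t))) t0 (mxr (Hs (Q0 t0)) *m dQ).
Proof.
move=> i k; rewrite ord1 mxE.
rewrite (_ : \sum_j _ = rsum (fun l => Hs (Q0 t0) i l * dQ l 0)); last first.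
  by apply: eq_bigr => l _; rewrite mxE.
by apply: derivable_pt_lim_ext (chain_rule (Hf i) (HHc i) Q0_coord_derive) => t; rewrite mxE.
Qed.

Lemma Hs_comp_derive : mx_is_derive (fun t => mxr (Hs (Q0 t))) t0 (deriv_mx DH (Q0 t0) dQ).
Proof.
move=> i j; rewrite mxE.
by apply: derivable_pt_lim_ext (chain_rule (HDH i j) (HDHc i j) Q0_coord_derive) => t; rewrite mxE.
Qed.

Lemma P1_derive : mx_is_derive (fun t => cv (P1 t)) t0 (usubmx (J *m dz)).
Proof.
pose H t := mxr (Hs (Q0 t)); pose Mm := mxr M.
pose K t := 1%:M + c *: (H t *m Mm).
pose r t := E *: cv (P0 t) - b *: cv (f (Q0 t)) - g *: cv noise.
have HKp t : K t *m cv (P1 t) = r t.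
  apply/matrixP => i k.
  rewrite mulmxDl mul1mx -scalemxAl -mulmxA /H /Mm -!cv_mulmv !mxE HP1; ring.
have HK : mx_is_derive K t0 (0 + c *: (deriv_mx DH (Q0 t0) dQ *m Mm)).
  apply: mx_is_derive_add; first exact: mx_is_derive_const.
  apply: mx_is_derive_scale.
  have := mx_is_derive_mul Hs_comp_derive (mx_is_derive_const t0 Mm).
  by rewrite mulmx0 addr0.
have Hr : mx_is_derive r t0 (E *: dP - b *: (H t0 *m dQ) - g *: 0).
  apply: mx_is_derive_sub; last exact/mx_is_derive_scale/mx_is_derive_const.
  by apply: mx_is_derive_sub; apply: mx_is_derive_scale; [exact: P0_derive | exact: f_comp_derive].
suff -> : usubmx (J *m dz) =
    invmx (K t0) *m (E *: dP - b *: (H t0 *m dQ) - g *: 0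
                     - (0 + c *: (deriv_mx DH (Q0 t0) dQ *m Mm)) *m cv (P1 t0)).
  exact: mx_is_derive_solve (fun t => HU (Q0 t)) HKp HK Hr.
rewrite /J /step_jacobian -[dz]vsubmxK mul_block_col col_mxKu.
rewrite add0r -scalemxAl -mulmxA deriv_mx_mulC scaler0 subr0.
rewrite !mulmxBr mulNmx -mulmxA mulmxDl mulmxDr -!scalemxAl -!scalemxAr opprD addrA.
by rewrite /K /H /Mm.
Qed.

Lemma Q1_derive : mx_is_derive (fun t => cv (Q1 t)) t0 (dsubmx (J *m dz)).
Proof.
pose Mm := mxr M.
have HQ1cv t : cv (Q1 t) = cv (Q0 t) + a *: (Mm *m cv (P1 t))
    + c *: (Mm *m cv (f (Q0 t))) + e *: (Mm *m cv noise).
  by apply/matrixP => i k; rewrite /Mm -!cv_mulmv !mxE HQ1.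
apply: mx_is_derive_ext (fun t => esym (HQ1cv t)) _.
have := mx_is_derive_add (mx_is_derive_add (mx_is_derive_add Q0_derive
    (mx_is_derive_scale a (mx_is_derive_mull Mm P1_derive)))
    (mx_is_derive_scale c (mx_is_derive_mull Mm f_comp_derive)))
    (mx_is_derive_scale e (mx_is_derive_mull Mm (mx_is_derive_const t0 (cv noise)))).
congr mx_is_derive.
rewrite mulmx0 scaler0 addr0 /J /step_jacobian -[dz]vsubmxK mul_block_col col_mxKu col_mxKd.
rewrite !mulmxDl mul1mx !mulmxDr -!scalemxAl -!mulmxA !scalerDr !addrA.
by rewrite -scalemxAl [dQ + _]addrC.
Qed.

Lemma scheme_step_derive : mx_is_derive (fun t => col_mx (cv (P1 t)) (cv (Q1 t))) t0 (J *m dz).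
Proof.
rewrite -[J *m _]vsubmxK.
by apply: mx_is_derive_col_mx; [exact: P1_derive | exact: Q1_derive].
Qed.

End OneStep.

Lemma sylvester_det n (A B : 'M[R]_n) : \det (1%:M + A *m B) = \det (1%:M + B *m A).
Proof.
have e1 : block_mx 1%:M (- A) B 1%:M =
          block_mx 1%:M 0 B 1%:M *m block_mx 1%:M (- A) 0 (1%:M + B *m A).
  rewrite mulmx_block ?mul1mx ?mul0mx ?mulmx0 ?mulmx1 ?addr0 ?add0r ?mulmxN.
  by rewrite [1%:M + _]addrC addKr.
have e2 : block_mx 1%:M (- A) B 1%:M =
          block_mx (1%:M + A *m B) (- A) 0 1%:M *m block_mx 1%:M 0 B 1%:M.
  rewrite mulmx_block ?mul1mx ?mul0mx ?mulmx0 ?mulmx1 ?addr0 ?add0r ?mulNmx.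
  by rewrite addrK.
have := congr1 determinant (etrans (esym e1) e2).
by rewrite !det_mulmx det_lblock !det_ublock !det1 !mul1r !mulr1.
Qed.

(* The Jacobian factors as [[1, 0], [a M, 1]] times [[E D, Y], [0, 1 + c M H]], and
   [det (1 + c M H) = det (1 + c H M) = det D^-1] by Sylvester's identity. *)
Lemma det_step_jacobian d (Hs : vec d -> rmat d d) DH (M : rmat d d) (E a b c : R)
    (q0 p1 : vec d) :
  1%:M + c *: (mxr (Hs q0) *m mxr M) \in unitmx ->
  \det (step_jacobian Hs DH M E a b c q0 p1) = E ^+ d.
Proof.
move=> HU; rewrite /step_jacobian /=.
set H := mxr (Hs q0); set Mm := mxr M; set K := 1%:M + c *: (H *m Mm).
set Y := - (invmx K *m _).
set W := 1%:M + c *: (Mm *m H).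
have -> : block_mx (E *: invmx K) Y (a *: (Mm *m (E *: invmx K)))
                   (1%:M + a *: (Mm *m Y) + c *: (Mm *m H))
        = block_mx 1%:M 0 (a *: Mm) 1%:M *m block_mx (E *: invmx K) Y 0 W.
  rewrite mulmx_block ?mul1mx ?mul0mx ?mulmx0 ?mulmx1 ?addr0 ?add0r -?scalemxAl.
  by rewrite /W addrCA addrA.
rewrite det_mulmx det_lblock det_ublock !det1 !mul1r detZ det_inv.
have -> : \det W = \det K by rewrite /W /K scalemxAl sylvester_det -scalemxAr.
have HK : \det K != 0 by rewrite -unitfE -unitmxE.
by rewrite -mulrA mulVf // mulr1.
Qed.

Fixpoint mx_lprod n (A : nat -> 'M[R]_n) k : 'M[R]_n :=
  if k is k'.+1 then A k' *m mx_lprod A k' else 1%:M.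

Lemma det_mx_lprod n (A : nat -> 'M[R]_n) k e :
  (forall k, \det (A k) = e) -> \det (mx_lprod A k) = e ^+ k.
Proof.
move=> HA; elim: k => [|k IH] /=; first by rewrite det1 expr0.
by rewrite det_mulmx HA IH exprS.
Qed.







Lemma exp_mul_INR x k : exp (x * INR k) = exp x ^+ k.
Proof.
elim: k => [|k IH]; first by rewrite Rmult_0_r exp_0.
by rewrite S_INR Rmult_plus_distr_l Rmult_1_r exp_plus IH exprSr.
Qed.

Lemma cv_upd_derive n (z : vec n) j : mx_is_derive (fun t => cv (upd z j t)) (z j) (col j 1%:M).
Proof.
move=> i k; rewrite !mxE; case: (eqVneq i j) => [->|Hne].
  by apply: derivable_pt_lim_ext (derivable_pt_lim_id _) => t; rewrite mxE upd_same.
by apply: derivable_pt_lim_ext (derivable_pt_lim_const _ _) => t; rewrite mxE /upd (negbTE Hne).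
Qed.

Section Iteration.
Local Open Scope R_scope.
Variables (d : nat) (f : vec d -> vec d) (Hs : vec d -> rmat d d)
  (DH : 'I_d -> 'I_d -> 'I_d -> vec d -> R) (M : rmat d d) (v h : R) (noise : nat -> vec d).
Hypothesis Hf : forall i q j, is_partial (fun x => f x i) q j (Hs q i j).
Hypothesis HHc : forall i j, rcontinuous (fun x => Hs x i j).
Hypothesis HDH : forall i j q l, is_partial (fun x => Hs x i j) q l (DH i j l q).
Hypothesis HDHc : forall i j l, rcontinuous (DH i j l).
Hypothesis HD : forall q, invertible (fun i j => rid d i j + h ^ 2 / 2 * mulmm (Hs q) M i j).
Variables (P Q : vec d -> vec d -> nat -> vec d).
Hypothesis H0 : forall p q, P p q 0%N = p /\ Q p q 0%N = q.
Hypothesis Hstep : forall p q k, scheme_step f Hs M v h (noise k)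
  (P p q k) (Q p q k) (P p q k.+1) (Q p q k.+1).

Definition scheme_jacobian p q k :=
  step_jacobian Hs DH M (exp (- v * h)) (h * (1 - v * h / 2) * exp (v * h))
    (h * (1 + v * h / 2) * exp (- v * h)) (h ^ 2 / 2) (Q p q k) (P p q k.+1).

Let flow k (z : vec (d + d)) := col_mx (cv (P (zP z) (zQ z) k)) (cv (Q (zP z) (zQ z) k)).

Lemma flow_derive p q j k :
  mx_is_derive (fun t => flow k (upd (pair_vec p q) j t)) (pair_vec p q j)
    (col j (mx_lprod (scheme_jacobian p q) k)).
Proof.
set z0 := pair_vec p q.
elim: k => [|k IH] /=.
  apply: mx_is_derive_ext (cv_upd_derive z0 j) => t.
  by rewrite /flow (proj1 (H0 _ _)) (proj2 (H0 _ _)) col_mx_zP_zQ.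
have := scheme_step_derive Hf HHc HDH HDHc (fun q => invertible_unitmx_shift (HD q))
  (fun t i => proj1 (Hstep _ _ k i)) (fun t i => proj2 (Hstep _ _ k i)) IH.
by rewrite upd_id zP_pair_vec zQ_pair_vec colE mulmxA -colE.
Qed.

End Iteration.

Local Open Scope R_scope.

Theorem mainTheorem2 (d m : nat) (Hdm : (d <= m)%nat)
  (F : vec d -> R) (f : vec d -> vec d) (Hs : vec d -> rmat d d)
  (M : rmat d d) (v h : R) (sigma : rmat d m) (dW : nat -> vec m)
  (HF : smooth F)
  (Hf : forall q i, is_partial F q i (f q i))
  (HHs : forall q i j, is_partial (fun x => f x i) q j (Hs q i j))
  (HM : sym_posdef M) (Hv : 0 < v) (Hh : 0 < h)
  (HD : forall q : vec d, invertible (fun i j : 'I_d => rid d i j + h ^ 2 / 2 * mulmm (Hs q) M i j))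
  (P Q : vec d -> vec d -> nat -> vec d)
  (H0 : forall p q, P p q 0%nat = p /\ Q p q 0%nat = q)
  (Hstep : forall p q (k : nat),
     scheme_step f Hs M v h (mulmv sigma (dW k.+1))
       (P p q k) (Q p q k) (P p q k.+1) (Q p q k.+1)) :
  forall (n : nat), (1 <= n)%nat -> forall p q : vec d,
    exists J : rmat (d + d) (d + d),
      (forall k j, is_partial
          (fun z => pair_vec (P (zP z) (zQ z) n) (Q (zP z) (zQ z) n) k)
          (pair_vec p q) j (J k j))
      /\ rdet J = exp (- v * (INR n * h) * INR d).
Proof.
move=> n _ p q.
have Hf_smooth i : smooth (fun x => f x i) := smooth_partial (G := fun j x => f x j) HF Hf i.
have Hs_smooth i j : smooth (fun x => Hs x i j) :=
  smooth_partial (G := fun j x => Hs x i j) (Hf_smooth i) (fun x j => HHs x i j) j.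
have [DH HDH] := functional_choice _ (fun ij : 'I_d * 'I_d => smooth_C1 (Hs_smooth ij.1 ij.2)).
pose A := scheme_jacobian Hs (fun i j => DH (i, j)) M v h P Q p q.
exists (fun a b => mx_lprod A n a b); split.
- move=> k j; have := flow_derive (fun i q j => HHs q i j) (fun i j => Hs_smooth i j 0%N)
    (fun i j q l => proj1 (HDH (i, j)) q l) (fun i j => proj2 (HDH (i, j))) HD H0 Hstep p q j n k ord0.
  rewrite /is_partial mxE; apply: derivable_pt_lim_ext => t.
  by rewrite pair_vecE.
- rewrite rdetE (_ : mxr _ = mx_lprod A n); last by apply/matrixP => a b; rewrite mxE.
  rewrite (det_mx_lprod n (e := exp (- v * h) ^+ d)) => [|k]; last first.
    exact/det_step_jacobian/invertible_unitmx_shift.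
  rewrite -exprM -exp_mul_INR mult_INR; congr exp.
  by rewrite !RmultE !RoppE; ring.
Qed.
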